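(* Let $k\ge2$ and $n\ge1$, and let $h_k(x_1,\dots,x_n)=\sum_{|J|=k}x^J$ be the complete homogeneous symmetric polynomial of degree $k$. Then the polynomials $\partial h_k/\partial x_i$, $i=1,\dots,n$, have no common zero in $\mathbb{C}^n\setminus\{0\}$. *)

From HB Require Import structures.
From mathcomp Require Import all_boot all_algebra.
From mathcomp Require Import Rstruct complex.
From mathcomp Require Import mpoly.

Set Implicit Arguments.
Unset Strict Implicit.
Unset Printing Implicit Defensive.

Import GRing.Theory.
Local Open Scope ring_scope.

Definition Cplx : numClosedFieldType := (Rdefinitions.R)[i].

Definition hsym (R : comRingType) (n k : nat) : {mpoly R[n]} :=
  \sum_(m : 'X_{1..n < k.+1} | mdeg m == k) 'X_[m].

From HB Require Import structures.
From mathcomp Require Import all_boot all_algebra.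
From mathcomp Require Import Rstruct complex.
From mathcomp Require Import mpoly.

(** The partial derivatives of the complete homogeneous symmetric polynomials
    satisfy [d_i h_(m+1) = h_m + x_i d_i h_m] and the Euler-type identity
    [sum_i d_i h_(m+1) = (n + m) h_m].  Let [x] have a nonzero coordinate and
    suppose all [d_i h_(m+2)] vanish at [x].  Then [h_(m+1)(x) = 0], hence
    [x_i d_i h_(m+1)(x) = 0] for every [i]; so [d_i h_(m+1)(x)] vanishes where
    [x_i <> 0] and equals [h_m(x)] where [x_i = 0].  Summing, the [z < n]
    vanishing coordinates give [z h_m(x) = (n + m) h_m(x)], whence
    [h_m(x) = 0] and all [d_i h_(m+1)] vanish at [x] as well.  Descending from
    [k] to [1] contradicts [d_i h_1 = 1]. *)

Set Implicit Arguments.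
Unset Strict Implicit.
Unset Printing Implicit Defensive.
Import GRing.Theory Num.Theory.
Local Open Scope ring_scope.

Section HsymDerivatives.
Variables (R : comNzRingType) (n : nat).

Lemma mcoeff_hsym m (a : 'X_{1..n}) : (hsym R n m)@_a = (mdeg a == m)%:R.
Proof.
rewrite /hsym raddf_sum /=; under eq_bigr do rewrite mcoeffX.
have [deg_a | deg_a] := eqVneq (mdeg a) m.
- have a_small : (mdeg a < m.+1)%N by rewrite deg_a.
  rewrite (bigD1 (BMultinom a_small)) /= ?deg_a ?eqxx // big1 ?addr0 //.
  move=> b /andP[_ b_neq]; case: eqP => // b_eq; case/eqP: b_neq.
  exact: val_inj.
- apply: big1 => b /eqP deg_b; case: eqP => // b_eq.
  by case/eqP: deg_a; rewrite -b_eq.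
Qed.

Lemma mcoeff_mderiv_hsym i m (a : 'X_{1..n}) :
  (mderiv i (hsym R n m))@_a = ((mdeg a).+1 == m)%:R *+ (a i).+1.
Proof. by rewrite mcoeff_deriv mcoeff_hsym mdegD mdeg1 addn1. Qed.

Lemma hsym0 : hsym R n 0 = 1.
Proof. by apply/mpolyP => a; rewrite mcoeff_hsym mcoeff1 mdeg_eq0. Qed.

Lemma mderiv_hsymS i m :
  mderiv i (hsym R n m.+1) = hsym R n m + mderiv i (hsym R n m) * 'X_i.
Proof.
apply/mpolyP => a; rewrite mcoeffD mcoeff_mderiv_hsym mcoeff_hsym eqSS.
have [a_i0 | a_i_gt0] := posnP (a i).
  suff -> : (mderiv i (hsym R n m) * 'X_i)@_a = 0 by rewrite a_i0 addr0.
  apply/eqP; apply: contraT; rewrite -mcoeff_msupp.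
  rewrite (perm_mem (msuppMX _ _)) => /mapP[b _ a_eq].
  by move: a_i0; rewrite a_eq mnmDE mnm1E eqxx.
have U_le_a : (U_(i) <= a)%MM.
  by apply/mnm_lepP => j; rewrite mnm1E; case: eqP => [<-|].
have a_eq : a = (U_(i) + (a - U_(i)))%MM by rewrite addmC submK.
rewrite [X in mcoeff X _]a_eq mcoeffMX mcoeff_mderiv_hsym.
have -> : (mdeg (a - U_(i))).+1 = mdeg a.
  by rewrite -addn1 -(mdeg1 i) -mdegD submK.
by rewrite mnmBE mnm1E eqxx subn1 prednK // -mulrS.
Qed.

Lemma mderiv_hsym1 i : mderiv i (hsym R n 1) = 1.
Proof. by rewrite mderiv_hsymS hsym0 -mpolyC1 mderivC mul0r addr0. Qed.

Lemma sum_mderiv_hsymS m :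
  \sum_(i < n) mderiv i (hsym R n m.+1) = hsym R n m *+ (n + m).
Proof.
apply/mpolyP => a; rewrite raddf_sum mcoeffMn mcoeff_hsym /=.
under eq_bigr do rewrite mcoeff_mderiv_hsym eqSS.
rewrite sumrMnr; have [deg_a|] := eqP; last by rewrite !mul0rn.
congr (_ *+ _); rewrite -deg_a mdegE -[n in (n + _)%N]card_ord -sum1_card.
rewrite -big_split /=.
by apply: eq_bigr => j _; rewrite add1n.
Qed.

End HsymDerivatives.

Section CriticalPoints.
Variables (R : numDomainType) (n : nat) (x : 'I_n -> R).

Definition hsym_critical (m : nat) : Prop :=
  forall i : 'I_n, (mderiv i (hsym R n m)).@[x] = 0.

Lemma meval_mderiv_hsymS i m :
  (mderiv i (hsym R n m.+1)).@[x] =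
  (hsym R n m).@[x] + (mderiv i (hsym R n m)).@[x] * x i.
Proof. by rewrite mderiv_hsymS mevalD mevalM mevalXU. Qed.

Lemma meval_sum_mderiv_hsymS m :
  \sum_(i < n) (mderiv i (hsym R n m.+1)).@[x] = (hsym R n m).@[x] *+ (n + m).
Proof. by rewrite -raddf_sum /= sum_mderiv_hsymS mevalMn. Qed.

Lemma hsym_critical_meval m :
  (0 < n + m)%N -> hsym_critical m.+1 -> (hsym R n m).@[x] = 0.
Proof.
move=> nm_gt0 crit; apply/eqP; move: (meval_sum_mderiv_hsymS m).
rewrite big1 // => /esym/eqP; rewrite mulrn_eq0 => /orP[|//].
by rewrite eqn0Ngt nm_gt0.
Qed.

Lemma not_hsym_critical1 : (0 < n)%N -> ~ hsym_critical 1.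
Proof.
move=> n_gt0 /(_ (Ordinal n_gt0)) /eqP.
by rewrite mderiv_hsym1 meval1 oner_eq0.
Qed.

Variable i0 : 'I_n.
Hypothesis x_i0_neq0 : x i0 != 0.

Lemma card_zero_coords_lt : (#|[pred i | x i == 0%R]| < n)%N.
Proof.
rewrite -[n in (_ < n)%N]card_ord; apply: proper_card; apply/properP.
by split; [apply/subsetP | exists i0; rewrite ?inE].
Qed.

Lemma hsym_critical_pred m : hsym_critical m.+2 -> hsym_critical m.+1.
Proof.
move=> crit; have h_m1 : (hsym R n m.+1).@[x] = 0.
  by apply: hsym_critical_meval crit; rewrite addnS.
have dh_nz i : x i != 0 -> (mderiv i (hsym R n m.+1)).@[x] = 0.
  move=> x_i_neq0; have /eqP := crit i.
  rewrite meval_mderiv_hsymS h_m1 add0r mulf_eq0 (negbTE x_i_neq0) orbF.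
  by move/eqP.
have dh_z i : x i = 0 -> (mderiv i (hsym R n m.+1)).@[x] = (hsym R n m).@[x].
  by move=> x_i0; rewrite meval_mderiv_hsymS x_i0 mulr0 addr0.
set z := #|[pred i | x i == 0]|.
have sum_dh :
    \sum_(i < n) (mderiv i (hsym R n m.+1)).@[x] = (hsym R n m).@[x] *+ z.
  rewrite (bigID (fun i => x i == 0)) /= [X in _ + X]big1 => [|i]; last first.
    exact: dh_nz.
  rewrite addr0 (eq_bigr (fun _ => (hsym R n m).@[x])) => [|i /eqP]; last first.
    exact: dh_z.
  by rewrite sumr_const.
have z_lt : (z < n + m)%N := leq_trans card_zero_coords_lt (leq_addr m n).
have h_m : (hsym R n m).@[x] = 0.
  have : (hsym R n m).@[x] *+ (n + m - z) = 0.
    by rewrite mulrnBr ?(ltnW z_lt) // -meval_sum_mderiv_hsymS sum_dh subrr.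
  by move/eqP; rewrite mulrn_eq0 subn_eq0 leqNgt z_lt => /eqP.
by move=> i; have [/dh_z ->|/dh_nz] := eqVneq (x i) 0.
Qed.

Lemma not_hsym_critical k : (0 < k)%N -> ~ hsym_critical k.
Proof.
case: k => // k _; elim: k => [|k IHk]; last by move/hsym_critical_pred.
by apply: not_hsym_critical1; apply: leq_ltn_trans (leq0n i0) (ltn_ord i0).
Qed.

End CriticalPoints.

Theorem lemma15 (k n : nat) (hk : (2 <= k)%N) (hn : (1 <= n)%N)
  (x : 'I_n -> Cplx) :
  (forall i : 'I_n, (mderiv i (hsym Cplx n k)).@[x] = 0) ->
  forall i : 'I_n, x i = 0.
Proof.
(* [hn] is redundant: a nonzero coordinate [x i] already forces [0 < n]. *)
move=> crit i; apply/eqP; apply: contraT => x_i_neq0.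
by have := not_hsym_critical x_i_neq0 (ltnW hk) crit.
Qed.
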